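(* Let $Q=((A,V);B;\alpha)$ be as in the context and $\varphi$ any scale function. (1) Every $x\in A\hat\otimes_\alpha B$ can be written as $x=x_1+x_2$ with $x_1,x_2\in\mathfrak B_\varphi(Q)$. (2) Suppose moreover that $A$ and $B$ are unital Banach algebras and $A\hat\otimes_\alpha B$ is a Banach algebra with multiplication determined by $(a_1\otimes b_1)(a_2\otimes b_2)=(a_1a_2)\otimes(b_1b_2)$. Then every invertible $x\in(A\hat\otimes_\alpha B)^{-1}$ can be written as $x=x_1x_2$ where $x_1,x_2$ are invertible and $x_1,x_1^{-1},x_2,x_2^{-1}\in\mathfrak B_\varphi(Q)$.
   Context: $\mathbb F\in\{\mathbb R,\mathbb C\}$. $A$ is an infinite-dimensional separable Banach space over $\mathbb F$ and $V_0\subsetneq V_1\subsetneq\cdots\subset A$ are finite-dimensional subspaces whose union $V$ is dense in $A$. $B$ is a Banach space over $\mathbb F$, $\alpha$ a reasonable crossnorm on $A\otimes B$, $A\hat\otimes_\alpha B$ the completion. $E_n(x):=\inf_{h\in V_n\otimes B}\|x-h\|_{A\hat\otimes_\alpha B}$. A scale function is a nonincreasing $\varphi:\mathbb N\to(0,\infty)$ with $\varphi(n)\to0$. $\mathfrak B_\varphi(Q)=\{x:\liminf_{n\to\infty}(E_n(x))^{\varphi(n)}<1\}$. *)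

From Stdlib Require Import Reals List.
Open Scope R_scope.

Record Scalars := mkScalars {
  sc :> Type; s0 : sc; s1 : sc;
  sadd : sc -> sc -> sc; smul : sc -> sc -> sc; sopp : sc -> sc;
  sabs : sc -> R }.

Definition RF : Scalars := mkScalars R 0 1 Rplus Rmult Ropp Rabs.

Definition Cx : Type := (R * R)%type.
Definition CF : Scalars :=
  mkScalars Cx (0, 0) (1, 0)
    (fun z w => (fst z + fst w, snd z + snd w))
    (fun z w => (fst z * fst w - snd z * snd w, fst z * snd w + snd z * fst w))
    (fun z => (- fst z, - snd z))
    (fun z => sqrt (fst z ^ 2 + snd z ^ 2)).

Record NSpace (F : Scalars) := mkNS {
  pt :> Type; vzero : pt; vadd : pt -> pt -> pt; vopp : pt -> pt;
  vscal : F -> pt -> pt; vnorm : pt -> R }.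
Arguments vzero {F} _.
Arguments vadd {F _} _ _.
Arguments vopp {F _} _.
Arguments vscal {F _} _ _.
Arguments vnorm {F _} _.

Section Defs.
Context {F : Scalars}.

Definition vsub {X : NSpace F} (x y : X) : X := vadd x (vopp y).

Definition is_banach (X : NSpace F) : Prop :=
  (forall x y z : X, vadd x (vadd y z) = vadd (vadd x y) z) /\
  (forall x y : X, vadd x y = vadd y x) /\
  (forall x : X, vadd x (vzero X) = x) /\
  (forall x : X, vadd x (vopp x) = vzero X) /\
  (forall (c : F) (x y : X), vscal c (vadd x y) = vadd (vscal c x) (vscal c y)) /\
  (forall (c d : F) (x : X), vscal (sadd F c d) x = vadd (vscal c x) (vscal d x)) /\
  (forall (c d : F) (x : X), vscal (smul F c d) x = vscal c (vscal d x)) /\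
  (forall x : X, vscal (s1 F) x = x) /\
  (forall x : X, 0 <= vnorm x) /\
  (forall x : X, vnorm x = 0 -> x = vzero X) /\
  (forall (c : F) (x : X), vnorm (vscal c x) = sabs F c * vnorm x) /\
  (forall x y : X, vnorm (vadd x y) <= vnorm x + vnorm y) /\
  (forall u : nat -> X,
     (forall eps, 0 < eps -> exists N, forall m n, (N <= m)%nat -> (N <= n)%nat ->
        vnorm (vsub (u m) (u n)) < eps) ->
     exists l : X, forall eps, 0 < eps -> exists N, forall n, (N <= n)%nat ->
        vnorm (vsub (u n) l) < eps).

Definition lsum {X : NSpace F} (l : list X) : X := fold_right vadd (vzero X) l.

Definition in_span {X : NSpace F} (l : list X) (x : X) : Prop :=
  exists cs : list F, length cs = length l /\
    x = lsum (map (fun p => vscal (fst p) (snd p)) (combine cs l)).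

Definition is_subspace {X : NSpace F} (P : X -> Prop) : Prop :=
  P (vzero X) /\ (forall x y, P x -> P y -> P (vadd x y)) /\
  (forall c x, P x -> P (vscal c x)).

Definition finite_dim {X : NSpace F} (P : X -> Prop) : Prop :=
  exists l : list X, forall x, P x <-> in_span l x.

Definition is_filtration {A : NSpace F} (V : nat -> A -> Prop) : Prop :=
  (forall n, is_subspace (V n) /\ finite_dim (V n)) /\
  (forall n x, V n x -> V (S n) x) /\
  (forall n, exists x, V (S n) x /\ ~ V n x) /\
  (forall x eps, 0 < eps -> exists n y, V n y /\ vnorm (vsub x y) < eps).

Definition tsum {A B X : NSpace F} (t : A -> B -> X) (l : list (A * B)) : X :=
  fold_right (fun p acc => vadd (t (fst p) (snd p)) acc) (vzero X) l.

Definition is_linear_functional {X : NSpace F} (f : X -> F) : Prop :=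
  (forall x y, f (vadd x y) = sadd F (f x) (f y)) /\
  (forall c x, f (vscal c x) = smul F c (f x)).

Definition bounded_by {X : NSpace F} (f : X -> F) (M : R) : Prop :=
  forall x, sabs F (f x) <= M * vnorm x.

Definition fgsum {A B : NSpace F} (f : A -> F) (g : B -> F) (l : list (A * B)) : F :=
  fold_right (fun p acc => sadd F (smul F (f (fst p)) (g (snd p))) acc) (s0 F) l.

Definition is_bilinear {A B X : NSpace F} (t : A -> B -> X) : Prop :=
  (forall a a' b, t (vadd a a') b = vadd (t a b) (t a' b)) /\
  (forall c a b, t (vscal c a) b = vscal c (t a b)) /\
  (forall a b b', t a (vadd b b') = vadd (t a b) (t a b')) /\
  (forall c a b, t a (vscal c b) = vscal c (t a b)).

(** X with t : A x B -> X is the completion A ⊗^_α B for a reasonable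
    crossnorm α: X is Banach, t is bilinear, α(a⊗b) <= |a||b|, the dual
    condition α*(f⊗g) <= |f||g| holds, and span{t a b} is dense in X. *)
Definition is_tensor_completion {A B X : NSpace F} (t : A -> B -> X) : Prop :=
  is_banach X /\ is_bilinear t /\
  (forall a b, vnorm (t a b) <= vnorm a * vnorm b) /\
  (forall (f : A -> F) (g : B -> F) (M N : R),
     is_linear_functional f -> is_linear_functional g ->
     bounded_by f M -> bounded_by g N ->
     forall l, sabs F (fgsum f g l) <= M * N * vnorm (tsum t l)) /\
  (forall x : X, forall eps, 0 < eps -> exists l, vnorm (vsub x (tsum t l)) < eps).

Definition in_VnB {A B X : NSpace F} (V : nat -> A -> Prop) (t : A -> B -> X)
  (n : nat) (h : X) : Prop :=
  exists l : list (A * B), Forall (fun p => V n (fst p)) l /\ h = tsum t l.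

Definition rpow (a p : R) : R := if Rle_dec a 0 then 0 else Rpower a p.

Definition scale_function (phi : nat -> R) : Prop :=
  (forall n, 0 < phi n) /\ (forall n, phi (S n) <= phi n) /\ Un_cv phi 0.

(** 𝔅_φ(Q) = {x : liminf_n (E_n x)^{φ n} < 1}, with
    E_n x = inf_{h ∈ V_n⊗B} |x - h|.  Unfolded: there is r < 1 such that
    for infinitely many n, (E_n x)^{φ n} < r, i.e. some h ∈ V_n⊗B has
    |x-h|^{φ n} < r. *)
Definition Bphi {A B X : NSpace F} (V : nat -> A -> Prop) (t : A -> B -> X)
  (phi : nat -> R) (x : X) : Prop :=
  exists r, r < 1 /\ forall N, exists n, (N <= n)%nat /\
    exists h, in_VnB V t n h /\ rpow (vnorm (vsub x h)) (phi n) < r.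

Definition is_banach_algebra (X : NSpace F) (m : X -> X -> X) : Prop :=
  is_banach X /\
  (forall x y z, m x (m y z) = m (m x y) z) /\
  (forall x y z, m x (vadd y z) = vadd (m x y) (m x z)) /\
  (forall x y z, m (vadd x y) z = vadd (m x z) (m y z)) /\
  (forall c x y, vscal c (m x y) = m (vscal c x) y) /\
  (forall c x y, vscal c (m x y) = m x (vscal c y)) /\
  (forall x y, vnorm (m x y) <= vnorm x * vnorm y).

Definition is_unit {X : NSpace F} (m : X -> X -> X) (e : X) : Prop :=
  forall x, m e x = x /\ m x e = x.

Definition is_unital_banach_algebra (X : NSpace F) (m : X -> X -> X) (e : X) : Prop :=
  is_banach_algebra X m /\ is_unit m e /\ vnorm e = 1.

Definition inverse_pair {X : NSpace F} (m : X -> X -> X) (e x y : X) : Prop :=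
  m x y = e /\ m y x = e.

Definition invertible {X : NSpace F} (m : X -> X -> X) (e x : X) : Prop :=
  exists y, inverse_pair m e x y.

End Defs.

(** Let U_N be the set of points within distance (1/2)^(1/φ(n)) of V_n ⊗ B for
    some n ≥ N.  Each U_N is open, and dense because the V_n increase and
    ⋃_n V_n ⊗ B is dense; a point lying in every U_N has
    liminf_n E_n(x)^φ(n) ≤ 1/2, so it belongs to 𝔅_φ(Q).  By Baire's theorem,
    for countably many self-homeomorphisms f_i of a nonempty open W ⊆ X some
    w ∈ W has f_i(w) ∈ 𝔅_φ(Q) for all i.  For (1) take W = X with w ↦ w and
    w ↦ x − w; for (2) take W the group of units with w ↦ w, w⁻¹, x w⁻¹, w x⁻¹,
    and put x₁ = x w⁻¹, x₂ = w. *)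

From Stdlib Require Import Reals List Lra Lia ClassicalEpsilon.
From Stdlib Require Cantor.
Open Scope R_scope.

(* The axioms of [is_banach] only speak of scaling, so [vnorm (vopp x) = vnorm x]
   and [vnorm (vzero X) = 0] are obtained through a scalar [c = -1] with [|c| = 1]. *)
Definition signed_scalars (F : Scalars) : Prop :=
  exists c, sadd F c (s1 F) = s0 F /\ sadd F (s0 F) (s0 F) = s0 F /\
            sabs F c = 1 /\ sabs F (s0 F) = 0.

Lemma signed_scalars_RC (F : Scalars) : F = RF \/ F = CF -> signed_scalars F.
Proof.
  intros [-> | ->].
  - exists (-1). simpl. repeat split; try ring.
    + unfold Rabs; destruct Rcase_abs; lra.
    + apply Rabs_R0.
  - exists (-1, -0). simpl. repeat split; try (f_equal; ring).
    + match goal with |- sqrt ?a = _ => replace a with 1 by ring end; apply sqrt_1.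
    + match goal with |- sqrt ?a = _ => replace a with 0 by ring end; apply sqrt_0.
Qed.

Lemma Rle_forall_eps (a b : R) : (forall eps, 0 < eps -> a <= b + eps) -> a <= b.
Proof.
  intros H. destruct (Rle_dec a b) as [h|h]; auto.
  specialize (H ((a - b) / 2)). lra.
Qed.

Lemma Rmult_lt_eps (a b eps : R) :
  0 <= a -> 0 <= b -> 0 < eps -> b < eps / (a + 1) -> a * b < eps.
Proof.
  intros Ha Hb He H.
  apply Rmult_lt_compat_r with (r := a + 1) in H; [|lra].
  replace (eps / (a + 1) * (a + 1)) with eps in H by (field; lra). nra.
Qed.

Lemma half_pow_small (K eps : R) : 0 <= K -> 0 < eps -> exists n, K * (1/2) ^ n < eps.
Proof.
  intros HK He.
  destruct (pow_lt_1_zero (1/2)) with (y := eps / (K + 1)) as [N HN].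
  { rewrite Rabs_right; lra. }
  { apply Rdiv_lt_0_compat; lra. }
  exists N. specialize (HN N (le_n N)).
  rewrite Rabs_right in HN by (apply Rle_ge, pow_le; lra).
  apply Rmult_lt_eps; auto. apply pow_le; lra.
Qed.

Existing Class is_banach.
Existing Class signed_scalars.

Section NormedSpace.
Context {F : Scalars} {X : NSpace F} {HX : is_banach X} {HF : signed_scalars F}.

Lemma vaddA (x y z : X) : vadd x (vadd y z) = vadd (vadd x y) z.
Proof. destruct HX as (H&_); auto. Qed.
Lemma vaddC (x y : X) : vadd x y = vadd y x.
Proof. destruct HX as (_&H&_); auto. Qed.
Lemma vadd0 (x : X) : vadd x (vzero X) = x.
Proof. destruct HX as (_&_&H&_); auto. Qed.
Lemma vaddN (x : X) : vadd x (vopp x) = vzero X.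
Proof. destruct HX as (_&_&_&H&_); auto. Qed.
Lemma vscalDl (c d : F) (x : X) : vscal (sadd F c d) x = vadd (vscal c x) (vscal d x).
Proof. destruct HX as (_&_&_&_&_&H&_); auto. Qed.
Lemma vscal1 (x : X) : vscal (s1 F) x = x.
Proof. destruct HX as (_&_&_&_&_&_&_&H&_); auto. Qed.
Lemma vnorm_ge0 (x : X) : 0 <= vnorm x.
Proof. destruct HX as (_&_&_&_&_&_&_&_&H&_); auto. Qed.
Lemma vnorm_eq0 (x : X) : vnorm x = 0 -> x = vzero X.
Proof. destruct HX as (_&_&_&_&_&_&_&_&_&H&_); auto. Qed.
Lemma vnormZ (c : F) (x : X) : vnorm (vscal c x) = sabs F c * vnorm x.
Proof. destruct HX as (_&_&_&_&_&_&_&_&_&_&H&_); auto. Qed.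
Lemma vnormD (x y : X) : vnorm (vadd x y) <= vnorm x + vnorm y.
Proof. destruct HX as (_&_&_&_&_&_&_&_&_&_&_&H&_); auto. Qed.
Lemma vcomplete (u : nat -> X) :
  (forall eps, 0 < eps -> exists N, forall m n, (N <= m)%nat -> (N <= n)%nat ->
     vnorm (vsub (u m) (u n)) < eps) ->
  exists l : X, forall eps, 0 < eps -> exists N, forall n, (N <= n)%nat ->
     vnorm (vsub (u n) l) < eps.
Proof. destruct HX as (_&_&_&_&_&_&_&_&_&_&_&_&H); auto. Qed.

Lemma vadd0l (x : X) : vadd (vzero X) x = x.
Proof. rewrite vaddC; apply vadd0. Qed.

Lemma vaddIr (a b c : X) : vadd a c = vadd b c -> a = b.
Proof.
  intros H. rewrite <- (vadd0 a), <- (vadd0 b), <- (vaddN c), !vaddA, H. reflexivity.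
Qed.

Lemma vopp_unique (a b : X) : vadd a b = vzero X -> b = vopp a.
Proof.
  intros H. rewrite <- (vadd0 b), <- (vaddN a), vaddA, (vaddC b a), H, vadd0l.
  reflexivity.
Qed.

Lemma voppK (a : X) : vopp (vopp a) = a.
Proof. symmetry; apply vopp_unique. rewrite vaddC; apply vaddN. Qed.

Lemma voppD (a b : X) : vopp (vadd a b) = vadd (vopp a) (vopp b).
Proof.
  symmetry; apply vopp_unique.
  rewrite <- vaddA, (vaddC (vopp a) (vopp b)), (vaddA b), vaddN, vadd0l, vaddN.
  reflexivity.
Qed.

Lemma vsubv (a : X) : vsub a a = vzero X.
Proof. apply vaddN. Qed.

Lemma vsub_trans (a b c : X) : vadd (vsub a b) (vsub b c) = vsub a c.
Proof.
  unfold vsub. rewrite <- vaddA, (vaddA (vopp b)), (vaddC (vopp b) b), vaddN, vadd0l.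
  reflexivity.
Qed.

Lemma vaddKsub (a b : X) : vadd b (vsub a b) = a.
Proof. unfold vsub. rewrite (vaddC a), vaddA, vaddN, vadd0l. reflexivity. Qed.

Lemma vsubK (a b : X) : vadd (vsub a b) b = a.
Proof. rewrite vaddC. apply vaddKsub. Qed.

Lemma vsubBB (e p q : X) : vsub (vsub e p) (vsub e q) = vsub q p.
Proof.
  unfold vsub. rewrite voppD, voppK, <- vaddA, (vaddA (vopp p)), (vaddC (vopp p)),
    <- vaddA, vaddA, vaddN, vadd0l, vaddC. reflexivity.
Qed.

Lemma vsubKr (e q : X) : vsub e (vsub e q) = q.
Proof. unfold vsub. rewrite voppD, voppK, vaddA, vaddN, vadd0l. reflexivity. Qed.

Lemma vsubDD (a b c d : X) :
  vsub (vadd a b) (vadd c d) = vadd (vsub a c) (vsub b d).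
Proof.
  unfold vsub. rewrite voppD, <- !vaddA. f_equal.
  rewrite !vaddA. f_equal. apply vaddC.
Qed.

Lemma vsub_eq0 (a b : X) : vsub a b = vzero X -> a = b.
Proof. intros H. rewrite <- (vaddKsub a b), H, vadd0. reflexivity. Qed.

Lemma vscal0 (x : X) : vscal (s0 F) x = vzero X.
Proof.
  destruct HF as (c & _ & H00 & _).
  apply (vaddIr _ _ (vscal (s0 F) x)). rewrite <- vscalDl, H00, vadd0l. reflexivity.
Qed.

Lemma vnorm0 : vnorm (vzero X) = 0.
Proof.
  destruct HF as (c & _ & _ & _ & H0).
  rewrite <- (vscal0 (vzero X)), vnormZ, H0. ring.
Qed.

Lemma vnormN (x : X) : vnorm (vopp x) = vnorm x.
Proof.
  destruct HF as (c & Hc1 & _ & Hc & _).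
  assert (E : vscal c x = vopp x).
  { apply vopp_unique.
    transitivity (vadd (vscal c x) (vscal (s1 F) x)).
    - rewrite vscal1. apply vaddC.
    - rewrite <- vscalDl, Hc1. apply vscal0. }
  rewrite <- E, vnormZ, Hc. ring.
Qed.

Lemma vnorm_subC (a b : X) : vnorm (vsub a b) = vnorm (vsub b a).
Proof.
  rewrite <- vnormN. f_equal. unfold vsub. rewrite voppD, voppK, vaddC. reflexivity.
Qed.

Lemma vnorm_sub_triangle (a b c : X) :
  vnorm (vsub a c) <= vnorm (vsub a b) + vnorm (vsub b c).
Proof. rewrite <- (vsub_trans a b c). apply vnormD. Qed.


Section GeometricCauchy.
Variables (u : nat -> X) (c : nat -> R).
Hypothesis u_step : forall m, vnorm (vsub (u (S m)) (u m)) <= c m.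
Hypothesis c_half : forall m, c (S m) <= c m / 2.
Hypothesis c_ge0 : forall m, 0 <= c m.

Lemma geometric_antitone n m : (n <= m)%nat -> c m <= c n.
Proof. induction 1; [lra|]. specialize (c_half m); specialize (c_ge0 m); lra. Qed.

Lemma geometric_bound n : c n <= c 0%nat * (1/2) ^ n.
Proof. induction n; simpl; [lra|]. specialize (c_half n). lra. Qed.

Lemma geometric_dist n m : (n <= m)%nat -> vnorm (vsub (u m) (u n)) <= 2 * c n.
Proof.
  intros Hnm.
  assert (Hk : forall k, vnorm (vsub (u (k + n)%nat) (u n)) <= 2 * c n - 2 * c (k + n)%nat).
  { induction k as [|k IH]; simpl.
    - rewrite vsubv, vnorm0. lra.
    - pose proof (vnorm_sub_triangle (u (S (k + n))) (u (k + n)%nat) (u n)).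
      specialize (u_step (k + n)%nat); specialize (c_half (k + n)%nat). lra. }
  replace m with ((m - n) + n)%nat by lia.
  specialize (Hk (m - n)%nat); specialize (c_ge0 ((m - n) + n)%nat). lra.
Qed.

Lemma geometric_limit : exists l, forall n, vnorm (vsub (u n) l) <= 2 * c n.
Proof.
  destruct (vcomplete u) as [l Hl].
  { intros eps He.
    destruct (half_pow_small (c 0%nat) (eps / 2)) as [N HN]; [apply c_ge0|lra|].
    exists N. intros m n Hm Hn.
    pose proof (geometric_bound N).
    destruct (Nat.le_ge_cases n m) as [Hnm|Hmn].
    - pose proof (geometric_dist n m Hnm). pose proof (geometric_antitone N n Hn). lra.
    - rewrite vnorm_subC. pose proof (geometric_dist m n Hmn).
      pose proof (geometric_antitone N m Hm). lra. }
  exists l. intros n. apply Rle_forall_eps. intros eps He.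
  destruct (Hl eps He) as [N HN].
  set (m := Nat.max N n).
  assert (Hnm : vnorm (vsub (u n) (u m)) <= 2 * c n)
    by (rewrite vnorm_subC; apply geometric_dist, Nat.le_max_r).
  specialize (HN m (Nat.le_max_l N n)).
  pose proof (vnorm_sub_triangle (u n) (u m) l). lra.
Qed.

End GeometricCauchy.

Lemma half_contraction_fixpoint (T : X -> X) :
  (forall a b, vnorm (vsub (T a) (T b)) <= / 2 * vnorm (vsub a b)) -> exists s, T s = s.
Proof.
  intros HT.
  set (u := fun n => Nat.iter n T (vzero X)).
  assert (Hu : forall n, u (S n) = T (u n)) by reflexivity.
  set (K := vnorm (vsub (u 1%nat) (u 0%nat))).
  assert (HK : 0 <= K) by apply vnorm_ge0.
  set (c := fun m => K * (1/2) ^ m).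
  assert (Hstep : forall m, vnorm (vsub (u (S m)) (u m)) <= c m).
  { induction m as [|m IH]; unfold c in *; simpl pow.
    - fold K. lra.
    - rewrite !Hu. rewrite Hu in IH. eapply Rle_trans; [apply HT|]. lra. }
  destruct (geometric_limit u c Hstep) as [l Hl].
  { intros m; unfold c; simpl; lra. }
  { intros m; unfold c; apply Rmult_le_pos; [|apply pow_le]; lra. }
  exists l. apply vsub_eq0, vnorm_eq0, Rle_antisym; [|apply vnorm_ge0].
  apply Rle_forall_eps. intros eps He.
  destruct (half_pow_small (2 * K) eps) as [n Hn]; [lra|lra|].
  pose proof (vnorm_sub_triangle (T l) (u (S n)) l).
  pose proof (HT l (u n)). rewrite <- Hu, (vnorm_subC l) in H0.
  pose proof (Hl n). pose proof (Hl (S n)). unfold c in *. simpl pow in *. lra.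
Qed.

Definition vopen (W : X -> Prop) : Prop :=
  forall w, W w -> exists rho, 0 < rho /\ forall z, vnorm (vsub z w) < rho -> W z.

Definition vdense (Q : X -> Prop) : Prop :=
  forall w eps, 0 < eps -> exists z, Q z /\ vnorm (vsub z w) < eps.

Section Baire.
Variables (W : X -> Prop) (P : nat -> X -> Prop).
Hypothesis W_inhabited : exists w, W w.
Hypothesis W_open : vopen W.
Hypothesis P_open : forall k w, W w -> P k w ->
  exists rho, 0 < rho /\ forall z, vnorm (vsub z w) < rho -> P k z.
Hypothesis P_dense : forall k w eps, W w -> 0 < eps ->
  exists z, W z /\ P k z /\ vnorm (vsub z w) < eps.

Definition good_ball (k : nat) (b : X * R) : Prop :=
  0 < snd b /\ forall z, vnorm (vsub z (fst b)) <= 2 * snd b ->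
    W z /\ forall j, (j < k)%nat -> P j z.

Lemma good_ball_start : exists b, good_ball 0 b.
Proof.
  destruct W_inhabited as [w0 Hw0]. destruct (W_open w0 Hw0) as [rho [Hr Hrho]].
  exists (w0, rho / 3). split; simpl; [lra|].
  intros z Hz. split; [apply Hrho; lra|]. intros j Hj; lia.
Qed.

Lemma good_ball_step k b : good_ball k b -> exists b', good_ball (S k) b' /\
  vnorm (vsub (fst b') (fst b)) <= snd b / 2 /\ snd b' <= snd b / 2.
Proof.
  destruct b as [w r]; intros [Hr Hb]; simpl in *.
  destruct (Hb w) as [Ww _]; [rewrite vsubv, vnorm0; lra|].
  destruct (P_dense k w (r / 2) Ww) as [z [Wz [Pz Hzw]]]; [lra|].
  destruct (W_open z Wz) as [r1 [Hr1 H1]].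
  destruct (P_open k z Wz Pz) as [r2 [Hr2 H2]].
  pose proof (Rmin_l r1 r2). pose proof (Rmin_r r1 r2).
  assert (0 < Rmin r1 r2) by (apply Rmin_pos; lra).
  set (r' := Rmin (Rmin r1 r2 / 3) (r / 2)).
  assert (Hr'1 : r' <= Rmin r1 r2 / 3) by apply Rmin_l.
  assert (Hr'2 : r' <= r / 2) by apply Rmin_r.
  assert (Hr' : 0 < r') by (apply Rmin_glb_lt; lra).
  exists (z, r'); unfold good_ball; simpl. split; [split; [lra|]|split; lra].
  intros y Hy. split; [apply H1; lra|].
  intros j Hj. destruct (Nat.eq_dec j k) as [->|Hne]; [apply H2; lra|].
  apply (Hb y); [pose proof (vnorm_sub_triangle y z w); lra|lia].
Qed.

Theorem baire_category : exists w, W w /\ forall k, P k w.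
Proof.
  destruct good_ball_start as [b0 Hb0].
  pose (next k b := epsilon (inhabits b) (fun b' => good_ball (S k) b' /\
          vnorm (vsub (fst b') (fst b)) <= snd b / 2 /\ snd b' <= snd b / 2)).
  pose (ball k := nat_rect (fun _ => (X * R)%type) b0 next k).
  assert (Hnext : forall k, good_ball k (ball k) -> good_ball (S k) (ball (S k)) /\
      vnorm (vsub (fst (ball (S k))) (fst (ball k))) <= snd (ball k) / 2 /\
      snd (ball (S k)) <= snd (ball k) / 2).
  { intros k Hk. exact (epsilon_spec (inhabits (ball k)) _ (good_ball_step k _ Hk)). }
  assert (Hgood : forall k, good_ball k (ball k)).
  { induction k; [exact Hb0|apply Hnext, IHk]. }
  destruct (geometric_limit (fun k => fst (ball k)) (fun k => snd (ball k) / 2))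
    as [l Hl].
  - intros k; apply Hnext, Hgood.
  - intros k; pose proof (Hnext k (Hgood k)); lra.
  - intros k; pose proof (proj1 (Hgood k)); lra.
  - assert (Hin : forall k, W l /\ forall j, (j < k)%nat -> P j l).
    { intros k. apply (proj2 (Hgood k)). rewrite vnorm_subC.
      specialize (Hl k). cbv beta in Hl. pose proof (proj1 (Hgood k)). lra. }
    exists l. split; [apply (Hin 0%nat)|]. intros k. apply (proj2 (Hin (S k))); lia.
Qed.

End Baire.

Definition continuous_on (W : X -> Prop) (f : X -> X) : Prop :=
  forall w eps, W w -> 0 < eps -> exists rho, 0 < rho /\
    forall z, W z -> vnorm (vsub z w) < rho -> vnorm (vsub (f z) (f w)) < eps.

Definition homeomorphism_on (W : X -> Prop) (f : X -> X) : Prop :=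
  exists g, (forall w, W w -> W (f w) /\ W (g w) /\ g (f w) = w /\ f (g w) = w) /\
    continuous_on W f /\ continuous_on W g.

Lemma lipschitz_continuous_on (W : X -> Prop) (f : X -> X) (K : R) : 0 <= K ->
  (forall z w, vnorm (vsub (f z) (f w)) <= K * vnorm (vsub z w)) -> continuous_on W f.
Proof.
  intros HK Hf w eps _ He. exists (eps / (K + 1)). split; [apply Rdiv_lt_0_compat; lra|].
  intros z _ Hz. eapply Rle_lt_trans; [apply Hf|]. apply Rmult_lt_eps; auto using vnorm_ge0.
Qed.

Lemma continuous_on_comp (W : X -> Prop) (f g : X -> X) : (forall w, W w -> W (g w)) ->
  continuous_on W f -> continuous_on W g -> continuous_on W (fun w => f (g w)).
Proof.
  intros Hg Cf Cg w eps Ww He.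
  destruct (Cf (g w) eps (Hg w Ww) He) as [r1 [Hr1 H1]].
  destruct (Cg w r1 Ww Hr1) as [r2 [Hr2 H2]].
  exists r2. split; auto.
Qed.

Lemma homeomorphism_on_id (W : X -> Prop) : homeomorphism_on W (fun w => w).
Proof.
  exists (fun w => w).
  assert (C : continuous_on W (fun w => w))
    by (apply lipschitz_continuous_on with 1; intros; lra).
  repeat split; auto.
Qed.

Lemma homeomorphism_on_comp (W : X -> Prop) (f1 f2 : X -> X) :
  homeomorphism_on W f1 -> homeomorphism_on W f2 -> homeomorphism_on W (fun w => f1 (f2 w)).
Proof.
  intros [g1 [H1 [Cf1 Cg1]]] [g2 [H2 [Cf2 Cg2]]].
  exists (fun w => g2 (g1 w)). split; [|split; apply continuous_on_comp; auto;
    intros w Ww; [apply (H2 w Ww)|apply (H1 w Ww)]].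
  intros w Ww.
  destruct (H2 w Ww) as (Wf2w & _ & E2 & _).
  destruct (H1 w Ww) as (_ & Wg1w & _ & E1').
  destruct (H1 (f2 w) Wf2w) as (Wf & _ & E1 & _).
  destruct (H2 (g1 w) Wg1w) as (_ & Wg & _ & E2').
  repeat split; auto; congruence.
Qed.

Lemma baire_preimages (W : X -> Prop) (f : nat -> X -> X) (Q : nat -> X -> Prop) :
  (exists w, W w) -> vopen W -> (forall k, homeomorphism_on W (f k)) ->
  (forall k, vopen (Q k)) -> (forall k, vdense (Q k)) ->
  exists w, W w /\ forall k, Q k (f k w).
Proof.
  intros Hne HW Hf HQo HQd.
  apply (baire_category W (fun k w => Q k (f k w))); auto.
  - intros k w Ww Qw. destruct (Hf k) as [g [_ [Cf _]]].
    destruct (HQo k _ Qw) as [r1 [Hr1 H1]].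
    destruct (Cf w r1 Ww Hr1) as [r2 [Hr2 H2]].
    destruct (HW w Ww) as [r3 [Hr3 H3]].
    exists (Rmin r2 r3). split; [apply Rmin_pos; auto|]. intros z Hz.
    pose proof (Rmin_l r2 r3). pose proof (Rmin_r r2 r3).
    apply H1, H2; [apply H3|]; lra.
  - intros k w eps Ww He. destruct (Hf k) as [g [Hfg [_ Cg]]].
    destruct (Hfg w Ww) as (Wfw & _ & Egf & _).
    destruct (Cg (f k w) eps Wfw He) as [r1 [Hr1 H1]].
    destruct (HW (f k w) Wfw) as [r2 [Hr2 H2]].
    destruct (HQd k (f k w) (Rmin r1 r2)) as [y [Qy Hy]]; [apply Rmin_pos; auto|].
    pose proof (Rmin_l r1 r2). pose proof (Rmin_r r1 r2).
    assert (Wy : W y) by (apply H2; lra).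
    destruct (Hfg y Wy) as (_ & Wgy & _ & Efg).
    exists (g y). split; [|split]; auto.
    + rewrite Efg; auto.
    + rewrite <- Egf. apply H1; auto; lra.
Qed.

Lemma reflection_homeomorphism (x : X) : homeomorphism_on (fun _ => True) (vsub x).
Proof.
  exists (vsub x).
  assert (C : continuous_on (fun _ => True) (vsub x)).
  { apply lipschitz_continuous_on with 1; [lra|].
    intros z w. rewrite vsubBB, vnorm_subC. lra. }
  repeat split; auto; apply vsubKr.
Qed.

End NormedSpace.

Lemma additive_sub {F : Scalars} {X Y : NSpace F} {HX : is_banach X} {HY : is_banach Y}
  {HF : signed_scalars F} (g : X -> Y) :
  (forall a b, g (vadd a b) = vadd (g a) (g b)) ->
  forall a b, g (vsub a b) = vsub (g a) (g b).
Proof.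
  intros Hg a b.
  assert (H0 : g (vzero X) = vzero Y).
  { apply (vaddIr _ _ (g (vzero X))). rewrite <- Hg, vadd0, vadd0l. reflexivity. }
  assert (HN : g (vopp b) = vopp (g b)).
  { apply vopp_unique. rewrite <- Hg, vaddN, H0. reflexivity. }
  unfold vsub. rewrite Hg, HN. reflexivity.
Qed.

Section BanachAlgebra.
Context {F : Scalars} {X : NSpace F} {HF : signed_scalars F}
  (m : X -> X -> X) (e : X) (Hm : is_banach_algebra X m) (He : is_unit m e).

Let HX : is_banach X := proj1 Hm.
Existing Instance HX.

Lemma mulA x y z : m x (m y z) = m (m x y) z.
Proof. now pose proof Hm as (_&H&_). Qed.
Lemma mulDr x y z : m x (vadd y z) = vadd (m x y) (m x z).
Proof. now pose proof Hm as (_&_&H&_). Qed.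
Lemma mulDl x y z : m (vadd x y) z = vadd (m x z) (m y z).
Proof. now pose proof Hm as (_&_&_&H&_). Qed.
Lemma vnorm_mul x y : vnorm (m x y) <= vnorm x * vnorm y.
Proof. now pose proof Hm as (_&_&_&_&_&_&H). Qed.
Lemma mul1l x : m e x = x.
Proof. apply He. Qed.
Lemma mul1r x : m x e = x.
Proof. apply He. Qed.

Lemma mulBr x a b : m x (vsub a b) = vsub (m x a) (m x b).
Proof. apply (additive_sub (m x)). intros; apply mulDr. Qed.
Lemma mulBl x a b : m (vsub a b) x = vsub (m a x) (m b x).
Proof. apply (additive_sub (fun y => m y x)). intros; apply mulDl. Qed.

Lemma inverse_pair_unique x y y' :
  inverse_pair m e x y -> inverse_pair m e x y' -> y = y'.
Proof.
  intros [H1 H2] [H3 H4]. rewrite <- (mul1r y), <- H3, mulA, H2, mul1l. reflexivity.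
Qed.

Lemma inverse_pair_sym x y : inverse_pair m e x y -> inverse_pair m e y x.
Proof. intros [H1 H2]; split; auto. Qed.

Lemma inverse_pair_mul x x' y y' : inverse_pair m e x x' -> inverse_pair m e y y' ->
  inverse_pair m e (m x y) (m y' x').
Proof.
  intros [Hx Hx'] [Hy Hy']. split.
  - rewrite <- mulA, (mulA y), Hy, mul1l. exact Hx.
  - rewrite <- mulA, (mulA x'), Hx', mul1l. exact Hy'.
Qed.

Lemma unit_perturbation v : vnorm v <= / 2 ->
  exists s, inverse_pair m e (vadd e v) s /\ vnorm (vsub s e) <= 2 * vnorm e * vnorm v.
Proof.
  intros Hv.
  (* right and left inverses are the fixed points of s |-> e - v s and s |-> e - s v *)
  destruct (half_contraction_fixpoint (fun s => vsub e (m v s))) as [sR HsR].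
  { intros a b. rewrite vsubBB, <- mulBr, (vnorm_subC a b).
    eapply Rle_trans; [apply vnorm_mul|].
    apply Rmult_le_compat_r; [apply vnorm_ge0|exact Hv]. }
  destruct (half_contraction_fixpoint (fun s => vsub e (m s v))) as [sL HsL].
  { intros a b. rewrite vsubBB, <- mulBl, (vnorm_subC a b).
    eapply Rle_trans; [apply vnorm_mul|]. rewrite Rmult_comm.
    apply Rmult_le_compat_r; [apply vnorm_ge0|exact Hv]. }
  assert (HR : m (vadd e v) sR = e).
  { rewrite mulDl, mul1l. rewrite <- HsR at 1. apply vsubK. }
  assert (HL : m sL (vadd e v) = e).
  { rewrite mulDr, mul1r. rewrite <- HsL at 1. apply vsubK. }
  assert (sL = sR) by (rewrite <- (mul1r sL), <- HR, mulA, HL, mul1l; reflexivity).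
  subst sL. exists sR. split; [split; assumption|].
  assert (Hd : vnorm (vsub sR e) <= vnorm v * vnorm sR).
  { rewrite vnorm_subC. rewrite <- HsR at 1. rewrite vsubKr. apply vnorm_mul. }
  assert (Hs : vnorm sR <= 2 * vnorm e).
  { assert (vnorm sR <= vnorm e + vnorm (vsub sR e))
      by (rewrite <- (vaddKsub sR e) at 1; apply vnormD).
    pose proof (vnorm_ge0 sR). nra. }
  pose proof (vnorm_ge0 v). nra.
Qed.

Lemma inverse_near z z' : inverse_pair m e z z' -> forall eps, 0 < eps ->
  exists rho, 0 < rho /\ forall u, vnorm (vsub u z) < rho ->
    exists u', inverse_pair m e u u' /\ vnorm (vsub u' z') < eps.
Proof.
  intros [Hzz' Hz'z] eps Heps.
  set (a := vnorm z'). set (ne := vnorm e).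
  assert (Ha : 0 <= a) by apply vnorm_ge0. assert (Hne : 0 <= ne) by apply vnorm_ge0.
  set (K := 2 * (ne + 1) * (a + 1) * (a + 1)).
  assert (HK : 0 < K) by (unfold K; repeat apply Rmult_lt_0_compat; lra).
  exists (Rmin (/ (2 * (a + 1))) (eps / (K + 1))). split.
  { apply Rmin_pos; [apply Rinv_0_lt_compat|apply Rdiv_lt_0_compat]; lra. }
  intros u Hu.
  pose proof (Rmin_l (/ (2 * (a + 1))) (eps / (K + 1))).
  pose proof (Rmin_r (/ (2 * (a + 1))) (eps / (K + 1))).
  set (d := vsub u z) in *. set (v := m z' d).
  assert (Hd0 : 0 <= vnorm d) by apply vnorm_ge0.
  assert (Hvd : vnorm v <= a * vnorm d) by apply vnorm_mul.
  assert (Hv : vnorm v <= / 2).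
  { assert (Hle : a * vnorm d <= (a + 1) * / (2 * (a + 1)))
      by (apply Rmult_le_compat; lra).
    replace ((a + 1) * / (2 * (a + 1))) with (/ 2) in Hle by (field; lra). lra. }
  destruct (unit_perturbation v Hv) as [s [[Hs1 Hs2] Hs]].
  (* u = z (e + v), hence u^-1 = (e + v)^-1 z' *)
  assert (Hu_eq : m z (vadd e v) = u).
  { unfold v, d. rewrite mulDr, mul1r, mulA, Hzz', mul1l. apply vaddKsub. }
  exists (m s z'). split; [split|].
  - rewrite <- Hu_eq, <- mulA, (mulA (vadd e v)), Hs1, mul1l. exact Hzz'.
  - rewrite <- Hu_eq, mulA, <- (mulA s z' z), Hz'z, mul1r. exact Hs2.
  - replace (vsub (m s z') z') with (m (vsub s e) z') by (rewrite mulBl, mul1l; reflexivity).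
    eapply Rle_lt_trans; [apply vnorm_mul|]. fold a.
    assert (Hdist : vnorm (vsub s e) <= 2 * ne * (a * vnorm d)).
    { eapply Rle_trans; [exact Hs|]. apply Rmult_le_compat_l; lra. }
    assert (Hsmall : K * vnorm d < eps).
    { apply Rmult_lt_eps; lra. }
    assert (2 * ne * (a * vnorm d) * a <= K * vnorm d).
    { unfold K. assert (a * a <= (a + 1) * (a + 1)) by nra.
      assert (0 <= ne * vnorm d) by nra. nra. }
    pose proof (vnorm_ge0 (vsub s e)). nra.
Qed.

Definition inv_of (x : X) : X := epsilon (inhabits e) (inverse_pair m e x).

Lemma inv_ofP x : invertible m e x -> inverse_pair m e x (inv_of x).
Proof. intros Hx. exact (epsilon_spec (inhabits e) (inverse_pair m e x) Hx). Qed.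

Lemma inv_of_eq x y : inverse_pair m e x y -> inv_of x = y.
Proof. intros Hxy. apply (inverse_pair_unique x); auto. apply inv_ofP. exists y; auto. Qed.

Lemma invertible_open : vopen (invertible m e).
Proof.
  intros w [w' Hw']. destruct (inverse_near w w' Hw' 1) as [r [Hr H]]; [lra|].
  exists r. split; auto. intros z Hz. destruct (H z Hz) as [u' [Hu' _]]. exists u'; auto.
Qed.

Lemma inv_of_homeomorphism : homeomorphism_on (invertible m e) inv_of.
Proof.
  assert (Hinv : forall w, invertible m e w -> inverse_pair m e (inv_of w) w)
    by (intros w Hw; apply inverse_pair_sym, inv_ofP, Hw).
  exists inv_of. split.
  - intros w Hw. assert (invertible m e (inv_of w)) by (exists w; apply Hinv, Hw).
    repeat split; auto; apply inv_of_eq, Hinv, Hw.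
  - assert (C : continuous_on (invertible m e) inv_of).
    { intros w eps Hw He'.
      destruct (inverse_near w (inv_of w) (inv_ofP w Hw) eps He') as [r [Hr H]].
      exists r. split; auto. intros z _ Hz. destruct (H z Hz) as [u' [Hu' Hb]].
      rewrite (inv_of_eq z u' Hu'). exact Hb. }
    split; exact C.
Qed.

Lemma mul_left_homeomorphism c : invertible m e c -> homeomorphism_on (invertible m e) (m c).
Proof.
  intros [c' Hc]. exists (m c'). split; [|split].
  - intros w [w' Hw].
    repeat split.
    + exists (m w' c'). apply inverse_pair_mul; auto.
    + exists (m w' c). apply inverse_pair_mul; auto using inverse_pair_sym.
    + rewrite mulA, (proj2 Hc), mul1l. reflexivity.
    + rewrite mulA, (proj1 Hc), mul1l. reflexivity.
  - apply lipschitz_continuous_on with (vnorm c); [apply vnorm_ge0|].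
    intros z w. rewrite <- mulBr. apply vnorm_mul.
  - apply lipschitz_continuous_on with (vnorm c'); [apply vnorm_ge0|].
    intros z w. rewrite <- mulBr. apply vnorm_mul.
Qed.

Lemma mul_right_homeomorphism c :
  invertible m e c -> homeomorphism_on (invertible m e) (fun w => m w c).
Proof.
  intros [c' Hc]. exists (fun w => m w c'). split; [|split].
  - intros w [w' Hw].
    repeat split.
    + exists (m c' w'). apply inverse_pair_mul; auto.
    + exists (m c w'). apply inverse_pair_mul; auto using inverse_pair_sym.
    + rewrite <- mulA, (proj1 Hc), mul1r. reflexivity.
    + rewrite <- mulA, (proj2 Hc), mul1r. reflexivity.
  - apply lipschitz_continuous_on with (vnorm c); [apply vnorm_ge0|].
    intros z w. rewrite <- mulBl, Rmult_comm. apply vnorm_mul.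
  - apply lipschitz_continuous_on with (vnorm c'); [apply vnorm_ge0|].
    intros z w. rewrite <- mulBl, Rmult_comm. apply vnorm_mul.
Qed.

End BanachAlgebra.

Definition level_radius (phi : nat -> R) (n : nat) : R := Rpower (1/2) (/ phi n).

Lemma level_radius_pos phi n : 0 < level_radius phi n.
Proof. apply exp_pos. Qed.

Lemma rpow_lt_half p a : 0 < p -> a < Rpower (1/2) (/ p) -> rpow a p < 1/2.
Proof.
  intros Hp Ha. unfold rpow. destruct (Rle_dec a 0) as [h|h]; [lra|].
  apply Rnot_le_lt in h.
  assert (E : Rpower (Rpower (1/2) (/ p)) p = 1/2).
  { rewrite Rpower_mult, Rinv_l by lra. apply Rpower_1. lra. }
  rewrite <- E. apply Rlt_Rpower_l; lra.
Qed.

Section TensorLevels.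
Context {F : Scalars} {A B X : NSpace F} {HA : is_banach A} {HB : is_banach B}
  {HF : signed_scalars F}
  (V : nat -> A -> Prop) (t : A -> B -> X) (HV : is_filtration V)
  (Ht : is_tensor_completion t) (phi : nat -> R) (Hphi : scale_function phi).

Let HX : is_banach X := proj1 Ht.
Existing Instance HX.

Lemma filtration_mono n k a : V n a -> (n <= k)%nat -> V k a.
Proof.
  intros Ha Hle. induction Hle; auto. pose proof HV as (_&H&_). auto.
Qed.

Lemma tensorBl a a' b : t (vsub a a') b = vsub (t a b) (t a' b).
Proof.
  apply (additive_sub (fun a => t a b)). intros. now pose proof Ht as (_&(H&_)&_).
Qed.

Lemma tsum_approx l eps : 0 < eps -> exists n0, forall n, (n0 <= n)%nat ->
  exists l', Forall (fun p => V n (fst p)) l' /\ vnorm (vsub (tsum t l) (tsum t l')) < eps.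
Proof.
  revert eps. induction l as [|[a b] l IH]; intros eps He.
  - exists 0%nat. intros n _. exists nil. split; [constructor|].
    simpl. rewrite vsubv, vnorm0. exact He.
  - pose proof (vnorm_ge0 b).
    pose proof HV as (_&_&_&Hdense).
    destruct (Hdense a (eps / 2 / (vnorm b + 1))) as [n1 [v [Hv Hav]]].
    { apply Rdiv_lt_0_compat; lra. }
    destruct (IH (eps / 2)) as [n2 Hn2]; [lra|].
    exists (Nat.max n1 n2). intros n Hn.
    destruct (Hn2 n) as [l' [Hl' Hll']]; [lia|].
    exists ((v, b) :: l'). split.
    + constructor; auto. apply (filtration_mono n1); auto. lia.
    + simpl. rewrite vsubDD. eapply Rle_lt_trans; [apply vnormD|].
      rewrite <- tensorBl.
      assert (vnorm (t (vsub a v) b) <= vnorm (vsub a v) * vnorm b)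
        by (pose proof Ht as (_&_&Hcross&_); apply Hcross).
      assert (vnorm (vsub a v) * vnorm b < eps / 2).
      { rewrite Rmult_comm. apply Rmult_lt_eps; auto using vnorm_ge0; lra. }
      lra.
Qed.

Lemma levels_dense y eps N : 0 < eps ->
  exists n h, (N <= n)%nat /\ in_VnB V t n h /\ vnorm (vsub y h) < eps.
Proof.
  intros He. pose proof Ht as (_&_&_&_&Hdense).
  destruct (Hdense y (eps / 2)) as [l Hl]; [lra|].
  destruct (tsum_approx l (eps / 2)) as [n0 Hn0]; [lra|].
  destruct (Hn0 (Nat.max n0 N)) as [l' [Hl' Hll']]; [lia|].
  exists (Nat.max n0 N), (tsum t l'). split; [lia|]. split; [exists l'; auto|].
  pose proof (vnorm_sub_triangle y (tsum t l) (tsum t l')). lra.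
Qed.

Definition near_level (N : nat) (z : X) : Prop :=
  exists n, (N <= n)%nat /\
    exists h, in_VnB V t n h /\ vnorm (vsub z h) < level_radius phi n.

Lemma near_level_open N : vopen (near_level N).
Proof.
  intros z [n [Hn [h [Hh Hzh]]]]. exists (level_radius phi n - vnorm (vsub z h)).
  split; [lra|]. intros z' Hz'. exists n. split; auto. exists h. split; auto.
  pose proof (vnorm_sub_triangle z' z h). lra.
Qed.

Lemma near_level_dense N : vdense (near_level N).
Proof.
  intros z eps He. destruct (levels_dense z eps N He) as [n [h [Hn [Hh Hzh]]]].
  exists h. split.
  - exists n. split; auto. exists h. split; auto.
    rewrite vsubv, vnorm0. apply level_radius_pos.
  - rewrite vnorm_subC. exact Hzh.
Qed.

Lemma Bphi_of_near_levels z : (forall N, near_level N z) -> Bphi V t phi z.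
Proof.
  intros Hz. exists (1/2). split; [lra|]. intros N.
  destruct (Hz N) as [n [Hn [h [Hh Hzh]]]]. exists n. split; auto. exists h. split; auto.
  apply rpow_lt_half; auto. apply Hphi.
Qed.

Lemma generic_Bphi (W : X -> Prop) (f : nat -> X -> X) :
  (exists w, W w) -> vopen W -> (forall i, homeomorphism_on W (f i)) ->
  exists w, W w /\ forall i, Bphi V t phi (f i w).
Proof.
  intros Hne HW Hf.
  destruct (baire_preimages W (fun k => f (fst (Cantor.of_nat k)))
              (fun k => near_level (snd (Cantor.of_nat k)))) as [w [Ww Hw]]; auto.
  - intros k. apply near_level_open.
  - intros k. apply near_level_dense.
  - exists w. split; auto. intros i. apply Bphi_of_near_levels. intros N.
    specialize (Hw (Cantor.to_nat (i, N))). rewrite Cantor.cancel_of_to in Hw. exact Hw.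
Qed.

End TensorLevels.

Theorem theorem2p12 (F : Scalars) (HF : F = RF \/ F = CF)
  (A B X : NSpace F) (V : nat -> A -> Prop) (t : A -> B -> X) (phi : nat -> R)
  (HA : is_banach A) (HB : is_banach B) (HV : is_filtration V)
  (HX : is_tensor_completion t) (Hphi : scale_function phi) :
  (forall x : X, exists x1 x2 : X,
      Bphi V t phi x1 /\ Bphi V t phi x2 /\ x = vadd x1 x2) /\
  (forall (mA : A -> A -> A) (eA : A) (mB : B -> B -> B) (eB : B)
          (mX : X -> X -> X) (eX : X),
      is_unital_banach_algebra A mA eA ->
      is_unital_banach_algebra B mB eB ->
      is_banach_algebra X mX -> is_unit mX eX ->
      (forall a1 b1 a2 b2, mX (t a1 b1) (t a2 b2) = t (mA a1 a2) (mB b1 b2)) ->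
      forall x : X, invertible mX eX x ->
      exists x1 y1 x2 y2 : X,
        x = mX x1 x2 /\ inverse_pair mX eX x1 y1 /\ inverse_pair mX eX x2 y2 /\
        Bphi V t phi x1 /\ Bphi V t phi y1 /\
        Bphi V t phi x2 /\ Bphi V t phi y2).
Proof.
  pose proof (signed_scalars_RC F HF) as HFs.
  pose proof (proj1 HX) as HXb.
  split.
  - intros x.
    destruct (generic_Bphi V t HV HX phi Hphi (fun _ => True)
                (fun i w => match i with 0%nat => w | _ => vsub x w end)) as [w [_ Hw]].
    + exists x; trivial.
    + intros w _. exists 1. split; [lra|auto].
    + intros [|i]; [apply homeomorphism_on_id|apply reflection_homeomorphism].
    + exists w, (vsub x w). split; [apply (Hw 0%nat)|split; [apply (Hw 1%nat)|]].
      symmetry. apply vaddKsub.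
  - intros mA eA mB eB mX eX _ _ Hm He _ x Hx.
    set (inv := inv_of mX eX).
    set (y := inv x).
    assert (Hxy : inverse_pair mX eX x y) by apply inv_ofP, Hx.
    destruct (generic_Bphi V t HV HX phi Hphi (invertible mX eX)
                (fun i w => match i with
                            | 1%nat => inv w
                            | 2%nat => mX x (inv w)
                            | 3%nat => mX w y
                            | _ => w end)) as [w [Hw' Hw]].
    + exists eX, eX. split; apply He.
    + apply invertible_open; assumption.
    + intros [|[|[|[|i]]]].
      * apply homeomorphism_on_id.
      * apply inv_of_homeomorphism; assumption.
      * apply homeomorphism_on_comp;
          [apply mul_left_homeomorphism|apply inv_of_homeomorphism]; assumption.
      * apply mul_right_homeomorphism; auto. exists x. apply inverse_pair_sym, Hxy.
      * apply homeomorphism_on_id.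
    + pose proof (inv_ofP mX eX w Hw') as Hwinv. fold inv in Hwinv.
      exists (mX x (inv w)), (mX w y), w, (inv w).
      split; [|split; [|split; [exact Hwinv|]]].
      * rewrite <- (mulA mX Hm), (proj2 Hwinv), (mul1r mX eX He). reflexivity.
      * apply inverse_pair_mul; auto using inverse_pair_sym.
      * exact (conj (Hw 2%nat) (conj (Hw 3%nat) (conj (Hw 0%nat) (Hw 1%nat)))).
Qed.
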